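(* Let $\sigma$ be a symmetry of a pseudo-Boolean formula with support $\{x_{i_1},\dots,x_{i_k}\}$, $i_1<\dots<i_k$, and write $p_j=x_{i_j}$, $q_j=\sigma(x_{i_j})$. From the circuit constraints for $\sigma$ (defined below) together with $t_k\ge1$, the symmetry-breaking clauses $s_1+\bar p_1\ge1$; $s_{j+1}+\bar s_j+\bar p_{j+1}\ge1$ ($1\le j\le k-2$); $s_1+q_1\ge1$; $s_{j+1}+\bar s_j+q_{j+1}\ge1$ ($1\le j\le k-2$); $q_1+\bar p_1\ge1$; $\bar s_j+q_{j+1}+\bar p_{j+1}\ge1$ ($1\le j\le k-1$) can be derived using $O(k)$ RUP steps and cutting planes steps.
   Context: Literals are $x$ or $\bar x=1-x$; PB constraints $\sum_i c_i\ell_i\ge A$; $\neg(\sum c_i\ell_i\ge A)\doteq\sum c_i\bar\ell_i\ge\sum c_i-A+1$. A symmetry $\sigma$ of a formula $F$ is a permutation of literals with $\sigma(\bar\ell)=\overline{\sigma(\ell)}$ and finite support $\{x:\sigma(x)\ne x\}$ such that applying $\sigma$ to $F$ yields $F$ syntactically. Circuit constraints for $\sigma$ (fresh variables $s_1..s_{k-1}$, $t_1..t_k$): $\bar s_1+p_1+\bar q_1\ge1$; $2s_1+\bar p_1+q_1\ge2$; for $1\le j\le k-2$: $3\bar s_{j+1}+2s_j+p_{j+1}+\bar q_{j+1}\ge3$, $2s_{j+1}+2\bar s_j+\bar p_{j+1}+q_{j+1}\ge2$; $\bar t_1+q_1+\bar p_1\ge1$; $2t_1+\bar q_1+p_1\ge2$;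 for $1\le j\le k-1$: $4\bar t_{j+1}+3t_j+\bar s_j+q_{j+1}+\bar p_{j+1}\ge4$, $3t_{j+1}+3\bar t_j+s_j+\bar q_{j+1}+p_{j+1}\ge3$. A cutting planes step derives a new constraint from a bounded number of available constraints and literal axioms using addition, positive multiplication, division with rounding up, saturation ($\sum c_i\ell_i\ge A\mapsto\sum\min(c_i,A)\ell_i\ge A$) and weakening. A RUP step derives $D$ if unit propagation on the available constraints together with $\neg D$ reaches a conflict (unit propagation: a constraint with negative slack $\sum_{i:\rho(\ell_i)\ne0}c_i-A$ under partial assignment $\rho$ is a conflict; an unassigned literal whose coefficient exceeds the slack is set to true). *)

From HB Require Import structures.
From mathcomp Require Import all_boot all_order all_algebra.
Set Implicit Arguments. Unset Strict Implicit. Unset Printing Implicit Defensive.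
Import Order.TTheory GRing.Theory Num.Theory.
Local Open Scope ring_scope.

(* Original formula: variables x_n (n : nat), literals (n, b) where        *)
(* b = true means x_n and b = false means \bar x_n.                        *)
Definition olit := (nat * bool)%type.
Definition oneg (l : olit) : olit := (l.1, ~~ l.2).
(* A PB constraint  sum_i c_i l_i >= A  over original literals.            *)
Definition ocons := (seq (int * olit) * int)%type.
Definition osubst (sigma : olit -> olit) (C : ocons) : ocons :=
  ([seq (t.1, sigma t.2) | t <- C.1], C.2).
Definition oceq (C D : ocons) : bool := perm_eq C.1 D.1 && (C.2 == D.2).

Definition is_symmetry (F : seq ocons) (sigma : olit -> olit) (supp : seq nat) : Prop :=
  [/\ bijective sigma,
      (forall l, sigma (oneg l) = oneg (sigma l)) &
      sorted ltn supp] /\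
  [/\
      (forall n, (n \in supp) = (sigma (n, true) != (n, true))),
      (forall C, C \in F -> exists2 D, D \in F & oceq (osubst sigma C) D)
    & (forall D, D \in F -> exists2 C, C \in F & oceq (osubst sigma C) D)].

Inductive var := X of nat | S of nat | T of nat.

Definition var_enc (v : var) : nat * nat :=
  match v with X n => (0%N, n) | S n => (1%N, n) | T n => (2%N, n) end.
Definition var_dec (p : nat * nat) : option var :=
  match p with
  | (0, n) => Some (X n) | (1, n) => Some (S n) | (2, n) => Some (T n)
  | _ => None end%N.
Lemma var_encK : pcancel var_enc var_dec. Proof. by case. Qed.
HB.instance Definition _ := Countable.copy var (pcan_type var_encK).

(* literal (v, true) = v, (v, false) = \bar v *)
Definition lit := (var * bool)%type.
Definition neg (l : lit) : lit := (l.1, ~~ l.2).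
Definition of_olit (l : olit) : lit := (X l.1, l.2).

(* A PB constraint  sum_i c_i l_i >= A ; terms may be unnormalized.        *)
Definition pbc := (seq (int * lit) * int)%type.

(* linear form over variables: sum_v a_v v >= b  (using \bar v = 1 - v)   *)
Definition coefv (C : pbc) (v : var) : int :=
  \sum_(t <- C.1 | t.2.1 == v) (if t.2.2 then t.1 else - t.1).
Definition rhs (C : pbc) : int := C.2 - \sum_(t <- C.1 | ~~ t.2.2) t.1.
Definition vars (C : pbc) : seq var := undup [seq t.2.1 | t <- C.1].

Definition normalize (C : pbc) : pbc :=
  ([seq (if 0 < coefv C v then (coefv C v, (v, true)) else (- coefv C v, (v, false)))
     | v <- vars C & coefv C v != 0],
   rhs C + \sum_(v <- vars C | coefv C v < 0) (- coefv C v)).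

Definition pequiv (C D : pbc) : Prop :=
  (forall v, coefv C v = coefv D v) /\ rhs C = rhs D.

(* negation:  not (sum c_i l_i >= A)  ==  sum c_i \bar l_i >= sum c_i - A + 1 *)
Definition negc (C : pbc) : pbc :=
  let N := normalize C in
  ([seq (t.1, neg t.2) | t <- N.1], \sum_(t <- N.1) t.1 - N.2 + 1).

Definition lit_axiom (l : lit) : pbc := ([:: (1, l)], 0).
Definition addc (C D : pbc) : pbc := (C.1 ++ D.1, C.2 + D.2).
Definition mulc (m : int) (C : pbc) : pbc := ([seq (m * t.1, t.2) | t <- C.1], m * C.2).
Definition cdiv (a d : int) : int := - ((- a) %/ d)%Z.
Definition divc (d : int) (C : pbc) : pbc :=
  let N := normalize C in ([seq (cdiv t.1 d, t.2) | t <- N.1], cdiv N.2 d).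
Definition satc (C : pbc) : pbc :=
  let N := normalize C in ([seq (Num.min t.1 N.2, t.2) | t <- N.1], N.2).
Definition weakc (v : var) (C : pbc) : pbc :=
  let N := normalize C in
  ([seq t <- N.1 | t.2.1 != v], N.2 - \sum_(t <- N.1 | t.2.1 == v) t.1).

Definition available (G : seq pbc) (C : pbc) : Prop :=
  C \in G \/ exists l, C = lit_axiom l.

Inductive cp_step (G : seq pbc) : pbc -> Prop :=
| cp_add A B : available G A -> available G B -> cp_step G (addc A B)
| cp_mul m A : available G A -> 0 < m -> cp_step G (mulc m A)
| cp_div d A : available G A -> 0 < d -> cp_step G (divc d A)
| cp_sat A : available G A -> 0 <= (normalize A).2 -> cp_step G (satc A)
| cp_weak v A : available G A -> cp_step G (weakc v A).

(* Unit propagation. A partial assignment is the list of literals set true. *)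
Definition slack (C : pbc) (rho : seq lit) : int :=
  let N := normalize C in \sum_(t <- N.1 | neg t.2 \notin rho) t.1 - N.2.

Inductive up_reach (D : seq pbc) : seq lit -> Prop :=
| up_nil : up_reach D [::]
| up_cons rho C t : up_reach D rho -> C \in D -> t \in (normalize C).1 ->
    t.2 \notin rho -> neg t.2 \notin rho -> slack C rho < t.1 ->
    up_reach D (t.2 :: rho).

Definition rup_step (G : seq pbc) (C : pbc) : Prop :=
  exists rho, exists2 E, E \in negc C :: G &
    up_reach (negc C :: G) rho /\ slack E rho < 0.

Fixpoint valid_deriv (G : seq pbc) (L : seq pbc) : Prop :=
  match L with
  | [::] => True
  | C :: L' => (rup_step G C \/ cp_step G C) /\ valid_deriv (rcons G C) L'
  end.

Definition derives (G : seq pbc) (L : seq pbc) (targets : seq pbc) : Prop :=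
  valid_deriv G L /\ forall D, D \in targets -> exists2 E, E \in L & pequiv D E.

(* Circuit constraints and symmetry-breaking clauses, indices from 1.      *)
Section Circuit.
Variables (p q : nat -> lit).
Let s j : lit := (S j, true).
Let t j : lit := (T j, true).

Definition circuit (k : nat) : seq pbc :=
  [:: ([:: (1, neg (s 1)); (1, p 1); (1, neg (q 1))], 1);
      ([:: (2, s 1); (1, neg (p 1)); (1, q 1)], 2)]
  ++ flatten [seq [:: ([:: (3, neg (s j.+1)); (2, s j); (1, p j.+1); (1, neg (q j.+1))], 3);
                      ([:: (2, s j.+1); (2, neg (s j)); (1, neg (p j.+1)); (1, q j.+1)], 2)]
             | j <- iota 1 (k - 2)]
  ++ [:: ([:: (1, neg (t 1)); (1, q 1); (1, neg (p 1))], 1);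
         ([:: (2, t 1); (1, neg (q 1)); (1, p 1)], 2)]
  ++ flatten [seq [:: ([:: (4, neg (t j.+1)); (3, t j); (1, neg (s j)); (1, q j.+1);
                           (1, neg (p j.+1))], 4);
                      ([:: (3, t j.+1); (3, neg (t j)); (1, s j); (1, neg (q j.+1));
                           (1, p j.+1)], 3)]
             | j <- iota 1 (k - 1)].

Definition tk_unit (k : nat) : pbc := ([:: (1, t k)], 1).

Definition sb_clauses (k : nat) : seq pbc :=
  [:: ([:: (1, s 1); (1, neg (p 1))], 1)]
  ++ [seq ([:: (1, s j.+1); (1, neg (s j)); (1, neg (p j.+1))], 1) | j <- iota 1 (k - 2)]
  ++ [:: ([:: (1, s 1); (1, q 1)], 1)]
  ++ [seq ([:: (1, s j.+1); (1, neg (s j)); (1, q j.+1)], 1) | j <- iota 1 (k - 2)]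
  ++ [:: ([:: (1, q 1); (1, neg (p 1))], 1)]
  ++ [seq ([:: (1, neg (s j)); (1, q j.+1); (1, neg (p j.+1))], 1) | j <- iota 1 (k - 1)].
End Circuit.

(* p_j = x_{i_j},  q_j = sigma(x_{i_j}) ,  j = 1..k *)
Definition pvar (supp : seq nat) (j : nat) : lit := (X (nth 0%N supp j.-1), true).
Definition qvar (sigma : olit -> olit) (supp : seq nat) (j : nat) : lit :=
  of_olit (sigma (nth 0%N supp j.-1, true)).

From mathcomp Require Import all_boot all_order all_algebra zify.
Set Implicit Arguments. Unset Strict Implicit. Unset Printing Implicit Defensive.
Import Order.TTheory GRing.Theory Num.Theory.
Local Open Scope ring_scope.

(* First the units t_(k-1), ..., t_1 are derived by RUP, downwards from t_k >= 1: with t_(j+1)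
   true and t_j false, the circuit constraint 4 ~t_(j+1) + 3 t_j + ~s_j + q_(j+1) + ~p_(j+1) >= 4
   is falsified.  Each clause containing s_1 or s_(j+1) follows by RUP from one s-constraint,
   e.g. falsifying s_(j+1) + ~s_j + ~p_(j+1) leaves at most 1 for 2 s_(j+1) + 2 ~s_j + ~p_(j+1)
   + q_(j+1) >= 2.  Finally, adding 4 t_(j+1) >= 4 and 3 ~t_j >= 0 to the t-constraint cancels
   its t-literals and leaves ~s_j + q_(j+1) + ~p_(j+1) >= 1 (similarly t_1 >= 1 for q_1 + ~p_1).
   These clauses are derived by cutting planes rather than RUP because q_j may be ~p_j, so they
   need not be in normal form. *)

Definition deriv_step (G : seq pbc) (C : pbc) : Prop := rup_step G C \/ cp_step G C.

Lemma up_reach_sub D D' rho : {subset D <= D'} -> up_reach D rho -> up_reach D' rho.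
Proof.
move=> sDD'; elim=> [|r C t _ IH CD tN nt nnt sl]; first exact: up_nil.
exact: up_cons IH (sDD' _ CD) tN nt nnt sl.
Qed.

Lemma available_sub G G' C : {subset G <= G'} -> available G C -> available G' C.
Proof. by move=> sGG' [/sGG'|]; [left|right]. Qed.

Lemma deriv_step_sub G G' C : {subset G <= G'} -> deriv_step G C -> deriv_step G' C.
Proof.
move=> sGG' [[rho [E EG [ur sl]]]|cp].
  have sG : {subset negc C :: G <= negc C :: G'}.
    by move=> x; rewrite !inE => /orP[->|/sGG' ->]; rewrite ?orbT.
  by left; exists rho; exists E; [apply: sG | split=> //; apply: up_reach_sub ur].
right; case: cp => [A B hA hB|m A hA m0|d A hA d0|A hA h|v A hA].
- by apply: cp_add; apply: available_sub sGG' _.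
- by apply: cp_mul => //; apply: available_sub hA.
- by apply: cp_div => //; apply: available_sub hA.
- by apply: cp_sat => //; apply: available_sub hA.
- by apply: cp_weak; apply: available_sub hA.
Qed.

Lemma valid_deriv_cat G L1 L2 :
  valid_deriv G L1 -> valid_deriv (G ++ L1) L2 -> valid_deriv G (L1 ++ L2).
Proof.
elim: L1 G => [|C L1 IH] G /=; first by rewrite cats0.
by move=> [hC hL1] hL2; split=> //; apply: IH; rewrite ?cat_rcons.
Qed.

Lemma valid_deriv_sub G G' L : {subset G <= G'} -> valid_deriv G L -> valid_deriv G' L.
Proof.
elim: L G G' => [//|C L IH] G G' sGG' /= [hC hL]; split; first exact: deriv_step_sub hC.
by apply: IH hL => x; rewrite !mem_rcons !inE => /orP[->|/sGG'->]; rewrite ?orbT.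
Qed.

Lemma valid_deriv_flatten G Ls :
  (forall L, L \in Ls -> valid_deriv G L) -> valid_deriv G (flatten Ls).
Proof.
elim: Ls => [//|L Ls IH] hLs /=; apply: valid_deriv_cat; first by apply: hLs; rewrite mem_head.
apply: valid_deriv_sub (IH _) => [x|L' L'Ls]; first by rewrite mem_cat => ->.
by apply: hLs; rewrite inE L'Ls orbT.
Qed.

Lemma valid_deriv_each G L : (forall C, C \in L -> deriv_step G C) -> valid_deriv G L.
Proof.
move=> hL; rewrite -[L]flatten_seq1; apply: valid_deriv_flatten => _ /mapP[C CL ->].
by split=> //; apply: hL.
Qed.

Lemma negK : involutive neg.
Proof. by case=> v b; rewrite /neg /= negbK. Qed.

Lemma neg_neq l : neg l != l.
Proof. by case: l => v b; rewrite xpair_eqE /= andbC; case: b. Qed.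

Definition consistent (rho : seq lit) : Prop := forall l, l \in rho -> neg l \notin rho.

Lemma up_reach_consistent D rho : up_reach D rho -> consistent rho.
Proof.
elim=> [//|r C t _ IH _ _ nt nnt _] l; rewrite !inE => /orP[/eqP->|lr].
  by rewrite (negbTE nnt) orbF neg_neq.
apply/norP; split; last exact: IH.
by apply: contraNneq nnt => <-; rewrite negK.
Qed.

(* The slack of [C] computed without normalizing it first.  For a consistent
   assignment it bounds the true slack from above, so it certifies conflicts. *)
Definition naive_slack (C : pbc) (rho : seq lit) : int :=
  \sum_(t <- C.1 | neg t.2 \notin rho) t.1 - C.2.

Definition nonneg_coefs (C : pbc) : bool := all (fun t => 0 <= t.1) C.1.

Definition lit_coef (s : seq (int * lit)) (l : lit) : int := \sum_(t <- s | t.2 == l) t.1.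

Lemma coefvE C v : coefv C v = lit_coef C.1 (v, true) - lit_coef C.1 (v, false).
Proof.
rewrite /coefv /lit_coef; elim: C.1 => [|[c [w b]] s IH]; first by rewrite !big_nil subr0.
rewrite !big_cons IH !xpair_eqE /=.
by case: (w == v); case: b => /=; lia.
Qed.

Lemma lit_coef_ge0 C l : nonneg_coefs C -> 0 <= lit_coef C.1 l.
Proof.
move=> /allP pos; rewrite /lit_coef big_seq_cond.
by apply: sumr_ge0 => t /andP[/pos].
Qed.

Lemma big_var_partition (s : seq (int * lit)) (P : pred (int * lit))
    (F : int * lit -> int) :
  \sum_(t <- s | P t) F t =
  \sum_(v <- undup [seq t.2.1 | t <- s]) \sum_(t <- s | (t.2.1 == v) && P t) F t.
Proof.
under [RHS]eq_bigr do rewrite big_mkcondl.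
rewrite exchange_big /= big_seq_cond [RHS]big_seq_cond; apply: eq_bigr => t /andP[ts _].
have tv : t.2.1 \in undup [seq t.2.1 | t <- s].
  by rewrite mem_undup (map_f (fun t : int * lit => t.2.1)).
rewrite (bigD1_seq _ tv (undup_uniq _)) /= eqxx big1 ?addr0 // => v.
by rewrite eq_sym => /negbTE->.
Qed.

Lemma big_var_lits (s : seq (int * lit)) v (Q : pred lit) :
  \sum_(t <- s | (t.2.1 == v) && Q t.2) t.1 =
  (if Q (v, true) then lit_coef s (v, true) else 0) +
  (if Q (v, false) then lit_coef s (v, false) else 0).
Proof.
rewrite /lit_coef; elim: s => [|[c [w b]] s IH].
  by rewrite !big_nil; case: ifP; case: ifP.
rewrite !big_cons IH !xpair_eqE /=.
case: (eqVneq w v) => [->|] //=.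
by case: b; case: (Q (v, true)); case: (Q (v, false)) => /=; lia.
Qed.

(* [P] and [M] stand for the total coefficients of [v] and of its negation. *)
Lemma normalized_var_slack_le v rho (P M : int) :
  consistent rho -> 0 <= P -> 0 <= M ->
  let t := if 0 < P - M then (P - M, (v, true)) else (- (P - M), (v, false)) in
  (if (P - M != 0) && (neg t.2 \notin rho) then t.1 else 0) + M
    - (if P - M < 0 then - (P - M) else 0)
  <= (if neg (v, true) \notin rho then P else 0) + (if neg (v, false) \notin rho then M else 0).
Proof.
move=> cons P0 M0 /=; rewrite /neg /=.
case vt: ((v, true) \in rho).
  have vf : ((v, false) \in rho) = false := negbTE (cons _ vt).
  by case: ltgtP => h /=; rewrite ?eqxx ?vt ?vf /=; lia.
by case: ltgtP => h /=; rewrite ?eqxx ?vt /=; case: ((v, false) \in rho) => /=; lia.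
Qed.

Lemma slack_le_naive C rho :
  consistent rho -> nonneg_coefs C -> slack C rho <= naive_slack C rho.
Proof.
move=> cons pos.
rewrite /slack /naive_slack /normalize /rhs /= big_map big_filter_cond.
rewrite big_mkcond (big_mkcond (fun v => coefv C v < 0)) /=.
rewrite (big_var_partition _ (fun t => ~~ t.2.2)).
rewrite (big_var_partition _ (fun t => neg t.2 \notin rho)).
have shift (a b d e : int) : a - (e - b + d) = a + b - d - e by lia.
rewrite -/(vars C) shift lerD2r -big_split -sumrB; apply: ler_sum => v _ /=.
rewrite (big_var_lits _ _ (fun l => ~~ l.2)) /=.
rewrite (big_var_lits _ _ (fun l => neg l \notin rho)) /=.
by rewrite coefvE add0r; apply: normalized_var_slack_le; rewrite // lit_coef_ge0.
Qed.

Lemma big_var_uniq (s : seq (int * lit)) (F : int * lit -> int) t :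
  uniq [seq t.2.1 | t <- s] -> t \in s -> \sum_(t' <- s | t'.2.1 == t.2.1) F t' = F t.
Proof.
elim: s => [//|x s IH] /= /andP[xs us]; rewrite inE big_cons => /orP[/eqP->|ts].
  rewrite eqxx big1_seq ?addr0 // => y /andP[/eqP ey ys].
  by move: xs; rewrite -ey (map_f (fun t : int * lit => t.2.1) ys).
have /negbTE-> : x.2.1 != t.2.1.
  by apply: contraNneq xs => ->; rewrite (map_f (fun t : int * lit => t.2.1) ts).
exact: IH.
Qed.

Lemma normalize_id C :
  uniq [seq t.2.1 | t <- C.1] -> all (fun t => 0 < t.1) C.1 -> normalize C = C.
Proof.
case: C => s r /= us /allP pos.
have cv t : t \in s -> coefv (s, r) t.2.1 = if t.2.2 then t.1 else - t.1.
  by move=> ts; rewrite /coefv /= (big_var_uniq (fun t => if t.2.2 then t.1 else - t.1)).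
rewrite /normalize /vars /= (undup_id us) filter_map.
have -> : [seq t <- s | preim (fun t => t.2.1) (fun v => coefv (s, r) v != 0) t] = s.
  rewrite -[RHS]filter_predT; apply: eq_in_filter => t ts /=; rewrite cv //.
  by have := pos t ts; case: t.2.2 => /=; lia.
rewrite -map_comp map_id_in => [|[c [v b]] ts /=]; last first.
  rewrite (cv _ ts); have /= := pos _ ts; case: b ts => _ /= c0;
  [by rewrite c0 | by rewrite oppr_gt0 ltNge (ltW c0) /=; congr pair; lia].
congr pair; rewrite /rhs /= big_map.
rewrite (big_seq_cond (fun t : int * lit => ~~ t.2.2)).
rewrite (big_seq_cond (fun t : int * lit => coefv (s, r) t.2.1 < 0)).
rewrite [X in _ + X](eq_big (fun t => (t \in s) && ~~ t.2.2) (fun t => t.1)) ?subrK // => t.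
  by case ts: (t \in s) => //=; rewrite cv //; have := pos t ts; case: t.2.2 => /=; lia.
by move=> /andP[ts]; rewrite cv //; have := pos t ts; case: t ts => c [v []] _ /=; lia.
Qed.

Lemma naive_slack_le_total C rho :
  nonneg_coefs C -> naive_slack C rho <= \sum_(t <- C.1) t.1 - C.2.
Proof.
move=> /allP pos; rewrite lerD2r [leRHS](bigID (fun t => neg t.2 \notin rho)) /= lerDl.
by rewrite big_seq_cond sumr_ge0 // => t /andP[/pos].
Qed.

Definition forced (D : seq pbc) (l : lit) : Prop :=
  exists C c, [/\ C \in D, normalize C = C, nonneg_coefs C, (c, l) \in C.1
                & \sum_(t <- C.1) t.1 - C.2 < c].

Lemma up_reach_forced D rho :
  uniq [seq l.1 | l <- rho] -> {in rho, forall l, forced D l} -> up_reach D rho.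
Proof.
elim: rho => [|l rho IH] /=; first by move=> *; apply: up_nil.
move=> /andP[lrho urho] frc.
have [C [c [CD nC pos lC sl]]] := frc l (mem_head _ _).
have fresh l' : l'.1 = l.1 -> l' \notin rho.
  by move=> e; apply: contra lrho => /(map_f (fun l : lit => l.1)); rewrite e.
apply: (@up_cons D rho C (c, l)); rewrite ?nC ?fresh //.
  by apply: IH => // l' l'rho; apply: frc; rewrite inE l'rho orbT.
by apply: le_lt_trans sl; rewrite /slack nC; apply: naive_slack_le_total.
Qed.

Definition clause (ls : seq lit) : pbc := ([seq (1, l) | l <- ls], 1).

Lemma normalize_clause ls : uniq [seq l.1 | l <- ls] -> normalize (clause ls) = clause ls.
Proof.
by move=> uls; apply: normalize_id; rewrite /= ?all_map -?map_comp //; apply/allP.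
Qed.

Lemma negc_clause ls :
  uniq [seq l.1 | l <- ls] -> negc (clause ls) = ([seq (1, neg l) | l <- ls], (size ls)%:Z).
Proof.
move=> uls; rewrite /negc normalize_clause //= -map_comp big_map.
by rewrite -sum1_size -natz natr_sum subrK.
Qed.

Lemma forced_unit D l : clause [:: l] \in D -> forced D l.
Proof.
move=> lD; exists (clause [:: l]), 1; split=> //.
- by rewrite normalize_clause.
- exact: mem_head.
- by rewrite /= big_seq1.
Qed.

Lemma forced_negc_clause G ls l :
  uniq [seq l.1 | l <- ls] -> l \in ls -> forced (negc (clause ls) :: G) (neg l).
Proof.
move=> uls lls; exists (negc (clause ls)), 1; rewrite mem_head negc_clause //; split=> //.
- by apply: normalize_id; rewrite /= ?all_map -?map_comp //; apply/allP.
- by rewrite /nonneg_coefs all_map; apply/allP.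
- by rewrite (map_f (fun l => (1, neg l))).
- by rewrite /= big_map -sum1_size -natz natr_sum subrr.
Qed.

Lemma rup_clause G ls us E :
  uniq [seq l.1 | l <- us ++ ls] -> all (fun u => clause [:: u] \in G) us ->
  E \in G -> nonneg_coefs E -> naive_slack E (us ++ [seq neg l | l <- ls]) < 0 ->
  rup_step G (clause ls).
Proof.
move=> uvars /allP units EG Epos conflict.
have uls : uniq [seq l.1 | l <- ls] by move: uvars; rewrite map_cat cat_uniq => /and3P[].
have reach : up_reach (negc (clause ls) :: G) (us ++ [seq neg l | l <- ls]).
  apply: up_reach_forced => [|l]; first by move: uvars; rewrite !map_cat -map_comp.
  rewrite mem_cat => /orP[/units lG | /mapP[l' l'ls ->]]; last exact: forced_negc_clause.
  by apply: forced_unit; rewrite inE lG orbT.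
exists (us ++ [seq neg l | l <- ls]), E; first by rewrite inE EG orbT.
split=> //; apply: le_lt_trans conflict.
exact: slack_le_naive (up_reach_consistent reach) Epos.
Qed.

Section Circuit.
Variables (p q : nat -> olit).
Local Notation pl j := (of_olit (p j)).
Local Notation ql j := (of_olit (q j)).
Local Notation sl j := ((S j, true) : lit).
Local Notation tl j := ((T j, true) : lit).
Local Notation circuit_pq := (circuit (fun j => pl j) (fun j => ql j)).
Local Notation sb_clauses_pq := (sb_clauses (fun j => pl j) (fun j => ql j)).

Definition circuit_s1 : pbc := ([:: (2, sl 1); (1, neg (pl 1)); (1, ql 1)], 2).
Definition circuit_s j : pbc :=
  ([:: (2, sl j.+1); (2, neg (sl j)); (1, neg (pl j.+1)); (1, ql j.+1)], 2).
Definition circuit_t1 : pbc := ([:: (1, neg (tl 1)); (1, ql 1); (1, neg (pl 1))], 1).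
Definition circuit_t j : pbc :=
  ([:: (4, neg (tl j.+1)); (3, tl j); (1, neg (sl j)); (1, ql j.+1); (1, neg (pl j.+1))], 4).

Lemma eq_S a b : (S a == S b) = (a == b). Proof. by []. Qed.
Lemma eq_T a b : (T a == T b) = (a == b). Proof. by []. Qed.

Local Ltac distinct_vars := rewrite /= !inE /= ?eq_S ?eq_T ?(gtn_eqF (ltnSn _)).

Local Ltac conflict := rewrite /naive_slack /= !big_cons big_nil !inE /= ?negK ?eqxx /=;
  rewrite ?xpair_eqE ?eq_S ?eq_T ?(gtn_eqF (ltnSn _)) ?(ltn_eqF (ltnSn _)) /=;
  repeat case: ifP => _; lia.

Lemma rup_s1_negp G : circuit_s1 \in G -> rup_step G (clause [:: sl 1; neg (pl 1)]).
Proof. by move=> EG; apply: (@rup_clause _ _ [::] _ _ _ EG) => //; conflict. Qed.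

Lemma rup_s1_q G : circuit_s1 \in G -> rup_step G (clause [:: sl 1; ql 1]).
Proof. by move=> EG; apply: (@rup_clause _ _ [::] _ _ _ EG) => //; conflict. Qed.

Lemma rup_s_negp G j :
  circuit_s j \in G -> rup_step G (clause [:: sl j.+1; neg (sl j); neg (pl j.+1)]).
Proof.
by move=> EG; apply: (@rup_clause _ _ [::] _ _ _ EG) => //; [distinct_vars | conflict].
Qed.

Lemma rup_s_q G j :
  circuit_s j \in G -> rup_step G (clause [:: sl j.+1; neg (sl j); ql j.+1]).
Proof.
by move=> EG; apply: (@rup_clause _ _ [::] _ _ _ EG) => //; [distinct_vars | conflict].
Qed.

Definition unit_t j : pbc := clause [:: tl j].

Lemma rup_unit_t G j : circuit_t j \in G -> unit_t j.+1 \in G -> rup_step G (unit_t j).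
Proof.
move=> EG uG; apply: (@rup_clause _ _ [:: tl j.+1] _ _ _ EG) => //=; last by conflict.
  by distinct_vars.
by rewrite uG.
Qed.

Definition q_sum j : pbc :=
  addc (addc (circuit_t j) (mulc 4 (unit_t j.+1))) (mulc 3 (lit_axiom (T j, false))).

Definition q_block j : seq pbc :=
  [:: mulc 4 (unit_t j.+1); addc (circuit_t j) (mulc 4 (unit_t j.+1));
      mulc 3 (lit_axiom (T j, false)); q_sum j].

Local Ltac same_linear_form := rewrite /pequiv /coefv /rhs /=; split; [move=> v|];
  rewrite !big_cons !big_nil /= ?addr0;
  repeat match goal with |- context [if ?b then _ else _] => case: b end; lia.

Lemma pequiv_q1 : pequiv (clause [:: ql 1; neg (pl 1)]) (addc circuit_t1 (unit_t 1)).
Proof. by same_linear_form. Qed.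

Lemma pequiv_q_sum j : pequiv (clause [:: neg (sl j); ql j.+1; neg (pl j.+1)]) (q_sum j).
Proof. by same_linear_form. Qed.

Lemma valid_q_block G j :
  circuit_t j \in G -> unit_t j.+1 \in G -> valid_deriv G (q_block j).
Proof.
move=> EG uG /=; split; first by right; apply: cp_mul => //; left.
split; first by right; apply: cp_add; left; rewrite mem_rcons inE ?eqxx ?EG ?orbT.
split; first by right; apply: cp_mul => //; right; exists (T j, false).
by split=> //; right; apply: cp_add; left; rewrite !(mem_rcons, inE) eqxx ?orbT.
Qed.

Lemma valid_units_t G n :
  unit_t n.+1 \in G -> (forall j, (0 < j <= n)%N -> circuit_t j \in G) ->
  valid_deriv G [seq unit_t j | j <- rev (iota 1 n)].
Proof.
elim: n G => [//|n IH] G uG EG; rewrite -[n.+1]addn1 iotaD rev_cat /= add1n; split.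
  by left; apply: rup_unit_t => //; apply: EG; rewrite ltnS leqnn.
apply: IH => [|j jn]; first by rewrite mem_rcons mem_head.
by rewrite mem_rcons inE EG ?orbT //; lia.
Qed.

Lemma mem_circuit_s1 k : circuit_s1 \in circuit_pq k.
Proof. by rewrite !mem_cat !inE eqxx ?orbT. Qed.

Lemma mem_circuit_s j k : (0 < j <= k - 2)%N -> circuit_s j \in circuit_pq k.
Proof.
move=> jk; rewrite !mem_cat; apply/orP; right; apply/orP; left.
by apply/flatten_mapP; exists j; rewrite ?inE ?eqxx ?orbT // mem_iota; lia.
Qed.

Lemma mem_circuit_t1 k : circuit_t1 \in circuit_pq k.
Proof. by rewrite !mem_cat !inE eqxx ?orbT. Qed.

Lemma mem_circuit_t j k : (0 < j <= k - 1)%N -> circuit_t j \in circuit_pq k.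
Proof.
move=> jk; rewrite !mem_cat; do 3 (apply/orP; right).
by apply/flatten_mapP; exists j; rewrite ?inE ?eqxx ?orbT // mem_iota; lia.
Qed.

Definition s_clauses k : seq pbc :=
  clause [:: sl 1; neg (pl 1)]
    :: [seq clause [:: sl j.+1; neg (sl j); neg (pl j.+1)] | j <- iota 1 (k - 2)]
  ++ clause [:: sl 1; ql 1]
    :: [seq clause [:: sl j.+1; neg (sl j); ql j.+1] | j <- iota 1 (k - 2)].

Definition q_clauses k : seq pbc :=
  clause [:: ql 1; neg (pl 1)]
    :: [seq clause [:: neg (sl j); ql j.+1; neg (pl j.+1)] | j <- iota 1 (k - 1)].

Lemma sb_clausesE k : sb_clauses_pq k = s_clauses k ++ q_clauses k.
Proof. by rewrite /s_clauses /= -catA. Qed.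

Definition q_derivation k : seq pbc :=
  addc circuit_t1 (unit_t 1) :: flatten [seq q_block j | j <- iota 1 (k - 1)].

Definition sb_derivation k : seq pbc :=
  [seq unit_t j | j <- rev (iota 1 (k - 1))] ++ s_clauses k ++ q_derivation k.

Lemma size_sb_derivation k : (0 < k)%N -> (size (sb_derivation k) <= 7 * k)%N.
Proof.
move=> k0.
have size_blocks (s : seq nat) : size (flatten [seq q_block j | j <- s]) = (4 * size s)%N.
  by elim: s => //= j s ->; lia.
rewrite !size_cat /= size_cat /= size_blocks !size_map size_rev !size_iota; lia.
Qed.

Lemma valid_sb_derivation k :
  (0 < k)%N -> valid_deriv (rcons (circuit_pq k) (tk_unit k)) (sb_derivation k).
Proof.
move=> k0; set G0 := rcons _ _; set Lt := [seq unit_t j | j <- rev (iota 1 (k - 1))].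
have inG0 C L : C \in circuit_pq k -> C \in G0 ++ L.
  by move=> CG; rewrite mem_cat mem_rcons inE CG orbT.
have units j L : (0 < j <= k)%N -> unit_t j \in (G0 ++ Lt) ++ L.
  move=> jk; rewrite -catA mem_cat mem_cat mem_rcons inE.
  have [->|jk'] := eqVneq j k; first by rewrite eqxx.
  by rewrite (map_f unit_t) ?orbT // mem_rev mem_iota; lia.
apply: valid_deriv_cat.
  apply: valid_units_t => [|j jk]; first by rewrite subn1 prednK // mem_rcons mem_head.
  by rewrite mem_rcons inE mem_circuit_t ?orbT.
apply: valid_deriv_cat.
  apply: valid_deriv_each => C; rewrite inE mem_cat inE => /or3P[/eqP->|/mapP[j + ->]|].
  - by left; apply: rup_s1_negp; rewrite inG0 ?mem_circuit_s1.
  - by rewrite mem_iota => jk; left; apply: rup_s_negp; rewrite inG0 ?mem_circuit_s //; lia.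
  move=> /orP[/eqP->|/mapP[j + ->]].
  - by left; apply: rup_s1_q; rewrite inG0 ?mem_circuit_s1.
  - by rewrite mem_iota => jk; left; apply: rup_s_q; rewrite inG0 ?mem_circuit_s //; lia.
split.
  by right; apply: cp_add; left; rewrite ?units // -catA inG0 ?mem_circuit_t1.
apply: valid_deriv_flatten => _ /mapP[j + ->]; rewrite mem_iota => jk.
apply: valid_q_block; rewrite -cats1 -catA; last by rewrite units //; lia.
by rewrite -catA inG0 ?mem_circuit_t //; lia.
Qed.

Lemma derives_sb_derivation k :
  (0 < k)%N -> derives (rcons (circuit_pq k) (tk_unit k)) (sb_derivation k) (sb_clauses_pq k).
Proof.
move=> k0; split; first exact: valid_sb_derivation.
have in_s C : C \in s_clauses k -> C \in sb_derivation k.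
  by move=> Cs; rewrite !mem_cat Cs orbT.
have in_q C : C \in q_derivation k -> C \in sb_derivation k.
  by move=> Cq; rewrite !mem_cat Cq !orbT.
move=> D; rewrite sb_clausesE mem_cat => /orP[/in_s DL|]; first by exists D.
rewrite inE => /orP[/eqP->|/mapP[j jk ->]].
  by exists (addc circuit_t1 (unit_t 1)); rewrite ?in_q ?mem_head //; apply: pequiv_q1.
exists (q_sum j); last exact: pequiv_q_sum.
by apply/in_q/orP; right; apply/flatten_mapP; exists j; rewrite // !inE eqxx !orbT.
Qed.

End Circuit.

Theorem lemma17 :
  exists c : nat, forall (F : seq ocons) (sigma : olit -> olit) (supp : seq nat),
    is_symmetry F sigma supp -> (0 < size supp)%N ->
    exists L : seq pbc,
      (size L <= c * size supp)%N /\
      derives (rcons (circuit (pvar supp) (qvar sigma supp) (size supp)) (tk_unit (size supp)))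
              L (sb_clauses (pvar supp) (qvar sigma supp) (size supp)).
Proof.
exists 7%N => F sigma supp _ k0.
pose p j : olit := (nth 0%N supp j.-1, true).
exists (sb_derivation p (sigma \o p) (size supp)).
by split; [exact: size_sb_derivation | exact: derives_sb_derivation].
Qed.
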